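(* Let $M,N$ be finitely presented $n$-parameter persistence modules and $\kappa,\varepsilon\ge0$ with $d_0(M,N)<\kappa\varepsilon$ and $c_M>2\kappa\varepsilon$. Then for every $\vec b\in\xi_0(N)$ at least one of the following holds: (B.1) $\vec b$ lies within $\|\cdot\|_\infty$-distance $2\kappa\varepsilon$ of $\mathrm{Im}\,\mathcal G_M$; (B.2) $\vec b$ lies within distance $\kappa\varepsilon$ of $\mathrm{Grid}_{\mathcal G_M}$ and generates a bar of length less than $2\kappa\varepsilon$ in the module $N^{\mathcal L'}$, where $\mathcal L'=\mathcal L_{\mathsf U^{\mathcal G_M}_{\kappa\varepsilon}\mathsf M^{\mathcal G_M}_{\kappa\varepsilon}(\vec b)}$; (B.3) $\vec b$ generates a bar of length less than $2\kappa\varepsilon$ in the module $N^{\mathcal L_{\vec b}}$.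
   Context: Modules are $\mathbb{R}^n$-graded modules over the monoid ring $P_n$ of $([0,\infty)^n,+)$ over a field; finitely presented = cokernel of a map of finitely generated free modules. $\xi_i(N)$: grades (support of the $i$-th multiparameter Betti number $\dim\mathrm{Tor}_i(N,P_n/I)_{\vec a}$, $I$ generated by $\vec x^{\vec a}$, $\vec a\ne0$), identified with generators of $F_i$ in a fixed minimal free resolution of $N$. Multiparameter Betti grid $\mathcal G_M$: the product over coordinates of the sets of distinct coordinate values of points of $\bigcup_i\xi_i(M)$; $c_M=\min\{\|\vec x-\vec y\|_\infty:\vec x\ne\vec y\in\mathrm{Im}\,\mathcal G_M\}$; $\mathrm{Grid}_{\mathcal G}=\{\vec x:x_j\in\mathrm{Im}\,\mathcal G^j\text{ for some }j\}$. Merge $\mathsf M^{\mathcal G}_\delta$: coordinatewise, $x_i\mapsto\mathcal G^i(k)$ if $|x_i-\mathcal G^i(k)|\le\delta$, else unchanged. Unmerge on $\mathrm{Grid}_{\mathcal G}$: $\mathsf U^{\mathcal G}_\delta(\vec x)=\mathsf M^{\mathcal G}_\delta(\vec x)+\delta\sum_{i\in\mathcal I_{\vec x}}\vec e_i$, $\mathcal I_{\vec x}=\{i:\inf_k|x_i-\mathcal G^i(k)|\le\delta\}$. $\mathcal L_{\vec p}=\{\vec p+t\vec1\}$. Matching distance: for positively sloped $\mathcal L$ with order-preserving $\|\cdot\|_\infty$-isometric parametrization $\iota_{\mathcal L}$ ($\iota_{\mathcal L}(0)\in\{x_n=0\}$), $M^{\mathcal L}=M\circ\iota_{\mathcal L}$,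 $\mathrm{push}_{\mathcal L}(\vec p)=\min\{\vec q\in\mathcal L:\vec q\ge\vec p\}$, $w(\mathcal L)=\|\mathrm{push}_{\mathcal L}(\iota_{\mathcal L}(0)+\vec1)-\iota_{\mathcal L}(0)\|_\infty$, $d_0(M,N)=\sup_{\mathcal L}w(\mathcal L)d_B(M^{\mathcal L},N^{\mathcal L})$. Bars: the induced resolution of $N^{\mathcal L}$ has generators $\vec b^{\mathcal L}$ of grade $\iota_{\mathcal L}^{-1}\mathrm{push}_{\mathcal L}(\vec b)$; fix isomorphisms $N^{\mathcal L}\cong\bigoplus_j\mathds 1^{[b_j,d_j)}$ (possibly empty intervals, one per generator of $F_0$) lifted to chain maps to the canonical resolution (generators $b_j$, relations $d_j\mapsto x^{d_j-b_j}b_j$), chosen so that each bar is generated by a unique generator and killed by a unique relation and every generator generates a bar; $\vec b$ generates $[b_j,d_j)$ if $\vec b^{\mathcal L}$ has grade $b_j$ and maps with nonzero coefficient on $b_j$. Length of $[b_j,d_j)$ is $d_j-b_j$ (0 if empty). *)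

From HB Require Import structures.
From mathcomp Require Import all_boot all_order all_algebra.
From mathcomp Require Import boolp classical_sets reals.
Set Implicit Arguments. Unset Strict Implicit. Unset Printing Implicit Defensive.
Import Order.TTheory GRing.Theory Num.Theory.
Local Open Scope ring_scope.

(* Grades live in R^(n.+1) (n.+1 >= 1 parameters; the last coordinate is ord_max). *)
Section PM.
Variables (R : realType) (k : fieldType) (n : nat).

Definition vec := 'I_n.+1 -> R.

Definition leV (x y : vec) : bool := [forall i, x i <= y i].

Definition normInf (x : vec) : R := \big[Num.max/0]_(i < n.+1) `|x i|.
Definition distInf (x y : vec) : R := normInf (fun i => x i - y i).

(* finitely generated graded free P_n-module: rank + grades of its basis *)
Record gfree := GFree { grk : nat; ggr : 'I_grk -> vec }.
Arguments ggr : clear implicits.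

(* A graded map F -> G is a k-matrix A (row i = image of generator i of F):
   generator i of F maps to sum_j A i j x^(ggr F i - ggr G j) g_j. *)
Definition graded (F G : gfree) (A : 'M[k]_(grk F, grk G)) : Prop :=
  forall i j, A i j != 0 -> leV (ggr G j) (ggr F i).

(* the sub-vector space F_x of k^(rank F): span of generators of grade <= x *)
Definition maskF (F : gfree) (x : vec) : 'M[k]_(grk F) :=
  diag_mx (\row_i (if leV (ggr F i) x then 1 else 0)).

(* a free complex  ... -> F_2 -> F_1 -> F_0 ; fd i : F_(i+1) -> F_i *)
Record fres := FRes { fF : nat -> gfree;
                      fd : forall i, 'M[k]_(grk (fF i.+1), grk (fF i)) }.
Arguments fd : clear implicits.

(* F is a minimal free resolution (of finite length) of the module
   M := coker (fd 0); exactness checked gradewise at every x in R^n. *)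
Definition isMinRes (F : fres) : Prop :=
  [/\ forall i, graded (fd F i),
      forall i x, (maskF (fF F i.+2) x *m fd F i.+1
                     == (maskF (fF F i.+1) x :&: kermx (fd F i)))%MS,
      forall i a b, fd F i a b != 0 -> ggr (fF F i.+1) a != ggr (fF F i) b
    & exists len, forall i, (len < i)%N -> grk (fF F i) = 0%N].

(* xi_i(M) identified with the grades of the generators of F_i *)
Definition xi (F : fres) (i : nat) : set vec :=
  [set x | exists l, x = ggr (fF F i) l].

(* coordinate value sets of the Betti grid: Im G^j *)
Definition gridCoord (F : fres) (j : 'I_n.+1) : set R :=
  [set r | exists i x, xi F i x /\ r = x j].

Definition imGrid (F : fres) : set vec :=
  [set x | forall j, gridCoord F j (x j)].

Definition gridSet (F : fres) : set vec :=
  [set x | exists j, gridCoord F j (x j)].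

(* c_M > c  (c_M = min distance between distinct points of Im G_M) *)
Definition cM_gt (F : fres) (c : R) : Prop :=
  exists c', c < c' /\
    forall x y, imGrid F x -> imGrid F y -> x <> y -> c' <= distInf x y.

Definition mergeC (F : fres) (d : R) (x : vec) : vec :=
  fun i => xget (x i) [set g | gridCoord F i g /\ `|x i - g| <= d].

Definition unmerge (F : fres) (d : R) (x : vec) : vec :=
  fun i => mergeC F d x i +
           (if `[< exists g, gridCoord F i g /\ `|x i - g| <= d >] then d else 0).

(* positively sloped lines: iota(t) = lq + t lv, lv > 0, |lv|_inf = 1,
   iota(0) in {x_n = 0} *)
Record line := Line { lq : vec; lv : vec }.
Definition validLine (L : line) : Prop :=
  [/\ forall i, 0 < lv L i, normInf (lv L) = 1 & lq L ord_max = 0].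
Definition iota (L : line) (t : R) : vec := fun i => lq L i + t * lv L i.

(* iota^-1 (push_L p), push_L p = min {q in L | q >= p} *)
Definition pushT (L : line) (p : vec) : R := inf [set t | leV p (iota L t)].

Definition weight (L : line) : R :=
  normInf (fun i => iota L (pushT L (fun j => lq L j + 1)) i - lq L i).

(* the diagonal line L_p = {p + t 1} with its parametrization *)
Definition diagLine (p : vec) : line :=
  Line (fun i => p i - p ord_max) (fun _ => 1).

(* Bar data on a line: bars [bb j, bd j) (bd j = None means +oo), one per
   generator of F_0, plus a chain map (phi0, phi1) from the induced
   presentation of F^L to the canonical resolution of the bars. *)
Record bardata (K0 K1 : nat) := BarData {
  bb : 'I_K0 -> R; bd : 'I_K0 -> option R;
  phi0 : 'M[k]_(K0, K0); phi1 : 'M[k]_(K1, K0) }.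

Definition BD (F : fres) := bardata (grk (fF F 0)) (grk (fF F 1)).

Section Line.
Variables (F : fres) (L : line) (B : BD F).
Definition tgen (i : 'I_(grk (fF F 0))) : R := pushT L (ggr (fF F 0) i).
Definition trel (r : 'I_(grk (fF F 1))) : R := pushT L (ggr (fF F 1) r).
Definition diedBy (j : 'I_(grk (fF F 0))) (t : R) : bool :=
  if bd B j is Some d then d <= t else false.
Definition srcGen t : 'M[k]_(grk (fF F 0)) :=
  diag_mx (\row_i (if tgen i <= t then 1 else 0)).
Definition srcRel t : 'M[k]_(grk (fF F 1), grk (fF F 0)) :=
  diag_mx (\row_r (if trel r <= t then 1 else 0)) *m fd F 0.
Definition tgtGen t : 'M[k]_(grk (fF F 0)) :=
  diag_mx (\row_j (if bb B j <= t then 1 else 0)).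
Definition tgtRel t : 'M[k]_(grk (fF F 0)) :=
  diag_mx (\row_j (if diedBy j t then 1 else 0)).

(* (phi0, phi1) is a chain map lifting an isomorphism
   F^L = coker(fd 0 on L) ~= (+)_j 1^[bb j, bd j). *)
Definition validDecomp : Prop :=
  [/\ forall j d, bd B j = Some d -> bb B j <= d,
      forall i j, phi0 B i j != 0 -> bb B j <= tgen i,
      forall r j, phi1 B r j != 0 -> (exists2 d, bd B j = Some d & d <= trel r),
      fd F 0 *m phi0 B = phi1 B
    & (forall t (v : 'rV[k]_(grk (fF F 0))), (v <= srcGen t)%MS ->
          (v *m phi0 B <= tgtRel t)%MS -> (v <= srcRel t)%MS) /\
      (forall t (w : 'rV[k]_(grk (fF F 0))), (w <= tgtGen t)%MS ->
          (exists2 v, (v <= srcGen t)%MS & (w - v *m phi0 B <= tgtRel t)%MS))].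

Definition generates i j : bool := (tgen i == bb B j) && (phi0 B i j != 0).
Definition kills r j : bool := (bd B j == Some (trel r)) && (phi1 B r j != 0).

Definition validBars : Prop :=
  [/\ validDecomp,
      forall j, exists! i, generates i j,
      forall j, bd B j != None -> exists! r, kills r j
    & forall i, exists j, generates i j].

Definition genShortBar (i : 'I_(grk (fF F 0))) (l : R) : Prop :=
  exists j, generates i j /\ exists2 d, bd B j = Some d & d - bb B j < l.
End Line.

Definition bottleneckLe (K0 K1 K0' K1' : nat) (B : bardata K0 K1)
    (B' : bardata K0' K1') (x : R) : Prop :=
  exists m : 'I_K0 -> 'I_K0' -> bool,
  [/\ forall i j j', m i j -> m i j' -> j = j',
      forall i i' j, m i j -> m i' j -> i = i',
      forall i j, m i j -> `|bb B i - bb B' j| <= x /\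
         match bd B i, bd B' j with
         | None, None => True
         | Some d, Some d' => `|d - d'| <= x
         | _, _ => False end,
      forall i, (forall j, ~~ m i j) ->
         exists2 d, bd B i = Some d & (d - bb B i) / 2 <= x
    & forall j, (forall i, ~~ m i j) ->
         exists2 d, bd B' j = Some d & (d - bb B' j) / 2 <= x].

Definition d0_lt (M N : fres) (BM : line -> BD M) (BN : line -> BD N) (c : R)
  : Prop :=
  exists2 delta, delta < c &
    forall L, validLine L -> bottleneckLe (BM L) (BN L) (delta / weight L).

End PM.
Arguments ggr {R n} g _.
Arguments fd {R k n} f i.

From Pilot Require Import Defs.
From HB Require Import structures.
From mathcomp Require Import all_boot all_order all_algebra.
From mathcomp Require Import boolp classical_sets reals.
From mathcomp Require Import ring lra.
Import Order.TTheory GRing.Theory Num.Theory.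
Local Open Scope ring_scope.

(* Put c = kappa * eps, y = M_c(b) and b' = U_c(y).  If every coordinate of b
   is within c of a grid value, y is a point of Im G_M within c of b.
   Otherwise b <= b' with equality in some coordinate, so on the diagonal line
   through b' the generator b is pushed to the base point of the line.  Every
   coordinate of b' is at distance >= c from all grid values (a merged
   coordinate sits exactly c above its grid value, and the others are at
   least c away by the separation c_M > 2c), so every generator of M is
   pushed at least c away from b.  Diagonal lines have weight 1, hence
   d_0(M,N) < c gives a matching of cost < c; the bar of b can then only be
   matched to a bar of M born at some pushed generator of M, which is
   impossible for a bar of length >= 2c.  So b generates a bar of length < 2c
   on that line: this is (B.2) if some coordinate was merged and (B.3)
   otherwise, since then b' = b. *)

Section DiagonalLines.
Context {R : realType} {n : nat}.
Implicit Types (p q x : vec R n).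

Lemma normInf_le x c : 0 <= c -> (forall i, `|x i| <= c) -> normInf x <= c.
Proof.
move=> c0 xc; rewrite /normInf; elim/big_ind: _ => // a b ac bc.
by rewrite ge_max ac bc.
Qed.

Lemma ler_normInf x i : `|x i| <= normInf x.
Proof. by rewrite /normInf (bigD1 i) //= le_max lexx. Qed.

Lemma normInf_cst1 : normInf (fun _ : 'I_n.+1 => 1 : R) = 1.
Proof.
apply/le_anti; rewrite normInf_le //=; last by move=> i; rewrite normr1.
by have := ler_normInf (fun _ => 1) ord0; rewrite normr1.
Qed.

Lemma pushT_diagLine {p q j0} : (forall j, q j - p j <= q j0 - p j0) ->
  pushT (diagLine p) q = q j0 - p j0 + p ord_max.
Proof.
move=> j0_max; set T := q j0 - p j0 + p ord_max.
have above t : leV q (Defs.iota (diagLine p) t) <-> T <= t.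
  rewrite /leV /Defs.iota /=; split => [/forallP/(_ j0)|tT].
    by rewrite mulr1 /T; lra.
  by apply/forallP => j; have := j0_max j; rewrite mulr1 /T in tT *; lra.
rewrite /pushT; apply/le_anti/andP; split.
  by apply: ge_inf; [exists T => t /above | exact/above].
by apply: lb_le_inf => [|t /above]; first by exists T; apply/above.
Qed.

Lemma exists_argmax (f : 'I_n.+1 -> R) : exists j0, forall j, f j <= f j0.
Proof.
case: (@arg_maxP _ _ _ ord0 xpredT f isT) => j0 _ j0_max.
by exists j0 => j; apply: j0_max.
Qed.

Lemma validLine_diagLine p : validLine (diagLine p).
Proof. by split => /=; [move=> _; exact: ltr01 | exact: normInf_cst1 | exact: subrr]. Qed.

Lemma weight_diagLine p : weight (diagLine p) = 1.
Proof.
set q := fun j => lq (diagLine p) j + 1.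
have [j0 j0_max] := exists_argmax (fun j => q j - p j).
rewrite /weight (pushT_diagLine j0_max) -[RHS]normInf_cst1; congr normInf.
by apply: funext => i; rewrite /Defs.iota /q /= mulr1; ring.
Qed.

Lemma pushT_diagLine_gap {p b x j0 d} :
  (forall j, b j <= p j) -> b j0 = p j0 -> (forall j, d <= `|x j - p j|) ->
  d <= `|pushT (diagLine p) x - pushT (diagLine p) b|.
Proof.
move=> b_le_p bp_j0 x_far.
have b_max j : b j - p j <= b j0 - p j0 by rewrite bp_j0 subrr subr_le0.
have [j1 x_max] := exists_argmax (fun j => x j - p j).
by rewrite (pushT_diagLine b_max) (pushT_diagLine x_max) bp_j0 subrr add0r addrK.
Qed.

End DiagonalLines.

Section Bars.
Context {R : realType} {k : fieldType} {n : nat} {L : line R n}.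

Lemma validDecomp_birth_tgen {M : fres R k n} {B : BD M} {j} :
  validDecomp L B -> ~~ diedBy B j (bb B j) -> exists g, tgen (F := M) L g = bb B j.
Proof.
(* Lift the unit vector of bar j at its birth t through phi0: a generator with
   a nonzero coefficient in the lift is born by time t, and not before t. *)
case=> _ phi0_birth _ _ [_ phi0_onto] alive.
set t := bb B j; set w : 'rV[k]_(grk (fF M 0)) := delta_mx 0 j.
have w_born : (w <= tgtGen B t)%MS.
  suff -> : w = w *m tgtGen B t by exact: submxMl.
  rewrite /tgtGen mul_mx_diag; apply/matrixP => a b; rewrite !mxE.
  by case: (eqVneq b j) => [->|_]; rewrite ?lexx ?mulr1 // andbF mul0r.
have [v /submxP [Dv ->] /submxP [Dw w_rel]] := phi0_onto t w w_born.
have hit_j : (Dv *m srcGen M L t *m phi0 B) 0 j != 0.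
  move/matrixP/(_ 0 j): w_rel.
  rewrite /tgtRel mul_mx_diag !mxE (negbTE alive) mulr0 !eqxx /=.
  by move/eqP; rewrite subr_eq0 => /eqP <-; exact: oner_neq0.
have [g] : exists g, (Dv *m srcGen M L t) 0 g * phi0 B g j != 0.
  apply/existsP; move: hit_j; apply: contraR; rewrite negb_exists => /forallP g0.
  by rewrite mxE; apply/eqP/big1 => g _; apply/eqP/negPn/g0.
rewrite mulf_eq0 negb_or => /andP [vg phi_gj].
exists g; apply/le_anti; rewrite phi0_birth //=.
by move: vg; rewrite /srcGen mul_mx_diag !mxE; case: ifP; rewrite ?mulr0 ?eqxx.
Qed.

Lemma genShortBar_or_tgen_close {M N : fres R k n} {BM : BD M} {BN : BD N}
    i {e l} :
  validDecomp L BM -> validBars L BN -> bottleneckLe BM BN e -> 2 * e < l ->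
  genShortBar L BN i l \/ exists g, `|tgen (F := M) L g - tgen L i| <= e.
Proof.
move=> decM [_ _ _ gen_bar] [m [_ _ m_close _ unmatched_short]] el.
have [j /andP [/eqP birth_j phi_ij]] := gen_bar i.
have short_j d : bd BN j = Some d -> d - bb BN j < l -> genShortBar L BN i l.
  by move=> dj lt; exists j; split; [rewrite /generates birth_j eqxx | exists d].
have [[j' m_j'j]|] := pselect (exists j', m j' j); last first.
  move=> /forallNP unm.
  have [d dj half] := unmatched_short j (fun j' => introN idP (unm j')).
  by left; apply: (short_j d dj); lra.
have [birth_close death_close] := m_close _ _ m_j'j.
have close_of_alive : ~~ diedBy BM j' (bb BM j') ->
    exists g, `|tgen (F := M) L g - tgen L i| <= e.
  by move=> /(validDecomp_birth_tgen decM) [g birth_g]; exists g; rewrite birth_g birth_j.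
move: death_close close_of_alive; rewrite /diedBy.
case: (bd BM j') => [d'|]; case dj: (bd BN j) => [d|] // death_close alive;
  last by right; apply: alive.
have [lt|ge] := ltP (d - bb BN j) l; first by left; apply: short_j dj lt.
right; apply: alive; rewrite -ltNge.
by move: birth_close death_close; rewrite !ler_norml => /andP [? ?] /andP [? ?]; lra.
Qed.

End Bars.

Lemma d0_lt_diagLine {R : realType} {k : fieldType} {n : nat} {M N : fres R k n}
    {BM : line R n -> BD M} {BN : line R n -> BD N} {c} (p : vec R n) :
  d0_lt BM BN c ->
  exists2 e, e < c & bottleneckLe (BM (diagLine p)) (BN (diagLine p)) e.
Proof.
move=> [e ec bneck]; exists e => //.
by have := bneck _ (validLine_diagLine p); rewrite weight_diagLine divr1.
Qed.

Definition nearGrid {R : realType} {k : fieldType} {n : nat} (M : fres R k n)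
    (d : R) (x : vec R n) (j : 'I_n.+1) : Prop :=
  exists g, gridCoord M j g /\ `|x j - g| <= d.

Section BettiGrid.
Context {R : realType} {k : fieldType} {n : nat} {M : fres R k n}.
Implicit Types (b x : vec R n) (j : 'I_n.+1).

Lemma imGrid_xi i x : xi M i x -> imGrid M x.
Proof. by move=> xi_x j; exists i, x. Qed.

Lemma cM_gt_le {c} c' : cM_gt M c -> c' <= c -> cM_gt M c'.
Proof.
by move=> [c'' [cc'' sep]] c'c; exists c''; split => //; exact: le_lt_trans cc''.
Qed.

Lemma gridCoord_sep {c j g1 g2} : cM_gt M c ->
  gridCoord M j g1 -> gridCoord M j g2 -> g1 != g2 -> c < `|g1 - g2|.
Proof.
move=> [c' [cc' sep]] [i1 [x1 [xi_x1 ->]]] [i2 [x2 [xi_x2 ->]]] x12.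
pose y (x : vec R n) : vec R n := fun l => if l == j then x j else x1 l.
have grid_y x i : xi M i x -> imGrid M (y x).
  by move=> xi_x l; rewrite /y; case: eqP => [->|_]; [exists i, x | exists i1, x1].
have y12 : y x1 <> y x2 by move/(congr1 (fun f => f j)); rewrite /y eqxx; apply/eqP.
apply: lt_le_trans cc' (le_trans (sep _ _ (grid_y _ _ xi_x1) (grid_y _ _ xi_x2) y12) _).
by apply: normInf_le => // l; rewrite /y; case: eqP => _; rewrite ?subrr ?normr0.
Qed.

Section Merge.
Context {d : R}.

Lemma mergeC_near {b j} : nearGrid M d b j ->
  gridCoord M j (mergeC M d b j) /\ `|b j - mergeC M d b j| <= d.
Proof. exact: xgetPex. Qed.

Lemma mergeC_far {b j} : ~ nearGrid M d b j -> mergeC M d b j = b j.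
Proof. by move=> far; apply: xgetPN => g near; apply: far; exists g. Qed.

Lemma unmerge_mergeC_far {b j} :
  ~ nearGrid M d b j -> unmerge M d (mergeC M d b) j = b j.
Proof.
move=> far; have far' : ~ nearGrid M d (mergeC M d b) j by rewrite /nearGrid mergeC_far.
by rewrite /unmerge (mergeC_far far') (mergeC_far far) asboolF ?addr0.
Qed.

Hypothesis d0 : 0 <= d.

Lemma dist_mergeC b j : `|b j - mergeC M d b j| <= d.
Proof.
have [/mergeC_near [] //|far] := pselect (nearGrid M d b j).
by rewrite mergeC_far // subrr normr0.
Qed.

Hypothesis sepM : cM_gt M d.

Lemma mergeC_grid {x j} : gridCoord M j (x j) -> mergeC M d x j = x j.
Proof.
move=> grid_x; apply: xget_unique; first by split; rewrite // subrr normr0.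
move=> g [grid_g xg]; apply/eqP; apply: contraT => gx.
by have := gridCoord_sep sepM grid_g grid_x gx; rewrite distrC ltNge xg.
Qed.

Lemma unmerge_mergeC_near {b j} : nearGrid M d b j ->
  unmerge M d (mergeC M d b) j = mergeC M d b j + d.
Proof.
move=> /mergeC_near [grid_y _]; rewrite /unmerge mergeC_grid // asboolT //.
by exists (mergeC M d b j); rewrite subrr normr0.
Qed.

Lemma le_unmerge_mergeC b j : b j <= unmerge M d (mergeC M d b) j.
Proof.
have [near|far] := pselect (nearGrid M d b j); last by rewrite unmerge_mergeC_far.
by rewrite unmerge_mergeC_near //; have := dist_mergeC b j; rewrite ler_norml; lra.
Qed.

End Merge.

Lemma le_dist_grid_unmerge_mergeC {d b j g} : 0 <= d -> cM_gt M (2 * d) ->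
  gridCoord M j g -> d <= `|g - unmerge M d (mergeC M d b) j|.
Proof.
move=> d0 sepM grid_g; have [near|far] := pselect (nearGrid M d b j); last first.
  rewrite unmerge_mergeC_far // distrC leNgt; apply/negP => /ltW bg.
  by apply: far; exists g.
have sep1 : cM_gt M d by apply: cM_gt_le sepM _; lra.
rewrite (unmerge_mergeC_near d0 sep1 near) opprD addrA.
have [grid_y _] := mergeC_near near.
have [->|gy] := eqVneq g (mergeC M d b j).
  by rewrite subrr add0r normrN ger0_norm.
move: (gridCoord_sep sepM grid_g grid_y gy); move: (g - _) => u.
rewrite ltr_normr ler_normr => /orP [] u_far; apply/orP.
  by left; lra.
by right; lra.
Qed.

End BettiGrid.

Theorem mainTheorem18 (R : realType) (k : fieldType) (n : nat)
  (M N : fres R k n)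
  (BM : line R n -> BD M) (BN : line R n -> BD N)
  (kappa eps : R) :
  0 <= kappa -> 0 <= eps ->
  isMinRes M -> isMinRes N ->
  (forall L, validLine L -> validDecomp L (BM L)) ->
  (forall L, validLine L -> validBars L (BN L)) ->
  d0_lt BM BN (kappa * eps) ->
  cM_gt M (2 * (kappa * eps)) ->
  forall i : 'I_(grk (fF N 0)),
    let b := ggr (fF N 0) i in
    (exists2 y, imGrid M y & distInf b y <= 2 * (kappa * eps))
    \/ ((exists2 y, gridSet M y & distInf b y <= kappa * eps) /\
        let L' := diagLine (unmerge M (kappa * eps) (mergeC M (kappa * eps) b)) in
        genShortBar L' (BN L') i (2 * (kappa * eps)))
    \/ genShortBar (diagLine b) (BN (diagLine b)) i (2 * (kappa * eps)).
Proof.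
move=> kappa0 eps0 _ _ decM barsN d0MN sepM i b.
set c := kappa * eps; have c0 : 0 <= c by exact: mulr_ge0.
have c_le_2c : c <= 2 * c by rewrite mulr_natl mulr2n lerDl.
set y := mergeC M c b; set b' := unmerge M c y.
have b_y : distInf b y <= c by apply: normInf_le => // j; exact: dist_mergeC.
have [near_all|/existsNP [j0 far_j0]] := pselect (forall j, nearGrid M c b j).
  left; exists y; last exact: le_trans b_y c_le_2c.
  by move=> j; have [] := mergeC_near (near_all j).
have shortL' : genShortBar (diagLine b') (BN (diagLine b')) i (2 * c).
  have lineL' := validLine_diagLine b'.
  have [e ec bneck] := d0_lt_diagLine b' d0MN.
  have ee : 2 * e < 2 * c by rewrite ltr_pM2l.
  have [//|[g close]] :=
    genShortBar_or_tgen_close i (decM _ lineL') (barsN _ lineL') bneck ee.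
  have grid_g : imGrid M (ggr (fF M 0) g) by apply: (imGrid_xi 0); exists g.
  have := pushT_diagLine_gap (le_unmerge_mergeC c0 (cM_gt_le c sepM c_le_2c) b)
    (esym (unmerge_mergeC_far far_j0))
    (fun j => le_dist_grid_unmerge_mergeC c0 sepM (grid_g j)).
  by rewrite /tgen in close; lra.
have [[j near_j]|/forallNP far_all] := pselect (exists j, nearGrid M c b j).
  right; left; split => //; exists y => //; exists j.
  by have [] := mergeC_near near_j.
right; right; suff <- : b' = b by [].
by apply: funext => j; exact: unmerge_mergeC_far (far_all j).
Qed.
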